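(* For $\lambda\ge1$ and $s\in\mathbb R$ let $$\widetilde L(s)=-\int_{-\infty}^{\infty}\Big[1-\cos\big(4\arctan e^{\lambda t}-4\arctan e^{t-s}\big)\Big]\,dt .$$ Let $\lambda_0>1$ be the value of $\lambda$ for which $\max_{t>0}\big(4\arctan e^{\lambda t}-4\arctan e^{t}\big)=\pi/2$ (numerically $\lambda_0\simeq3.68078$). If $1\le\lambda\le\lambda_0$, then $\widetilde L$ has a nondegenerate critical point at $s=0$.
   Context: This $\widetilde L$ is the reduced Melnikov potential for the Hamiltonian $\tfrac12(\eta_1^2+\eta_2^2)+(\cos\xi_1-1)+\lambda^2(\cos\xi_2-1)+\varepsilon(1-\cos(\xi_2-\xi_1))$ along the family of unperturbed homoclinic loops $\xi_1=4\arctan e^{t-s}$, $\xi_2=4\arctan e^{\lambda t}$. The maximum $\max_{t>0}(4\arctan e^{\lambda t}-4\arctan e^{t})$ is increasing in $\lambda$, from $0$ at $\lambda=1$ towards $\pi$ as $\lambda\to\infty$, so $\lambda_0$ is well defined. *)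

From Stdlib Require Import Reals.
From Coquelicot Require Import Coquelicot.
Open Scope R_scope.

Definition melnikov_integrand (lam s t : R) : R :=
  1 - cos (4 * atan (exp (lam * t)) - 4 * atan (exp (t - s))).

Definition Ltilde (lam s : R) : R :=
  - RInt_gen (melnikov_integrand lam s)
      (Rbar_locally m_infty) (Rbar_locally p_infty).

Definition phi (lam t : R) : R := 4 * atan (exp (lam * t)) - 4 * atan (exp t).

Definition is_lambda0 (l0 : R) : Prop :=
  1 < l0 /\
  (exists t0, 0 < t0 /\ phi l0 t0 = PI / 2) /\
  (forall t, 0 < t -> phi l0 t <= PI / 2).

Definition nondegenerate_critical_point (f : R -> R) (x0 : R) : Prop :=
  exists (f' : R -> R) (eps : R), 0 < eps /\
    (forall x, Rabs (x - x0) < eps -> is_derive f x (f' x)) /\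
    f' x0 = 0 /\
    exists d : R, is_derive f' x0 d /\ d <> 0.

From Stdlib Require Import Reals Lra.
From Coquelicot Require Import Coquelicot.
Open Scope R_scope.

(** Write [D = 2 sech] for the derivative of the kink [4 atan e^y] and [theta] for the
    angle inside the cosine.  The integrand and its [s]-derivatives decay like
    [e^{|s|} e^{-|t|}], so one may differentiate under the integral sign:
    [L'(s) = - \int sin theta D(t-s) dt], and [L''(s)] is the integral of the next
    derivative.  At [s = 0] the angle is [phi_lam], which is odd while [D] is even, so
    [L'(0) = 0].  Subtracting the exact [t]-derivative of [sin phi_lam(t) D(t)] turns
    the integrand of [-L''(0)] into [lam cos phi_lam(t) D(lam t) D(t)].  For
    [1 <= lam <= lam0] and [t > 0] one has [0 <= phi_lam t <= phi_lam0 t <= PI/2], hence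
    (by oddness) [|phi_lam| <= PI/2] everywhere; the integrand is then nonnegative and
    positive at [t = 0], so [L''(0) < 0]. *)

Local Notation Fm := (Rbar_locally m_infty).
Local Notation Fp := (Rbar_locally p_infty).

Lemma ex_RInt_continuous_R (h : R -> R) a b :
  (forall t, continuous h t) -> ex_RInt h a b.
Proof.
 intros Hc. apply (ex_RInt_continuous (V:=R_CompleteNormedModule)). intros; apply Hc.
Qed.

Lemma exp_le_compat x y : x <= y -> exp x <= exp y.
Proof.
 intros [Hlt| ->]; [left; apply exp_increasing; exact Hlt | right; reflexivity].
Qed.

Lemma Rabs_sub_le_of_derive (g dg : R -> R) K a b :
  (forall s, Rmin a b <= s <= Rmax a b -> is_derive g s (dg s)) ->
  (forall s, Rmin a b <= s <= Rmax a b -> Rabs (dg s) <= K) ->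
  Rabs (g b - g a) <= K * Rabs (b - a).
Proof.
 intros Hd Hb.
 destruct (MVT_gen g a b dg) as [c [Hc ->]].
 - intros s Hs; apply Hd; lra.
 - intros s Hs. apply derivable_continuous_pt. exists (dg s).
   apply is_derive_Reals, Hd, Hs.
 - rewrite Rabs_mult. apply Rmult_le_compat_r; [apply Rabs_pos | apply Hb, Hc].
Qed.

(** Two applications of the mean value inequality: to [s |-> f s - s * f1 x], whose
    derivative is [f1 s - f1 x], and to [f1]. *)
Lemma taylor2_remainder_le (f f1 f2 : R -> R) (g x h r : R) :
  (forall s, is_derive f s (f1 s)) -> (forall s, is_derive f1 s (f2 s)) ->
  Rabs h < r -> (forall s, Rabs (s - x) < r -> Rabs (f2 s) <= g) ->
  Rabs (f (x + h) - f x - h * f1 x) <= h ^ 2 * g.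
Proof.
 intros Hd1 Hd2 Hh Hg.
 assert (Hg0 : 0 <= g).
 { apply Rle_trans with (Rabs (f2 x)); [apply Rabs_pos|].
   apply Hg. rewrite Rminus_eq_0, Rabs_R0. generalize (Rabs_pos h); lra. }
 assert (Hf1 : forall s, Rabs (s - x) <= Rabs h -> Rabs (f1 s - f1 x) <= g * Rabs h).
 { intros s Hs. eapply Rle_trans.
   - apply (Rabs_sub_le_of_derive f1 f2 g x s); [intros; apply Hd2 |].
     intros u Hu. apply Hg. apply Rle_lt_trans with (Rabs (s - x)); [|lra].
     unfold Rmin, Rmax in Hu; destruct (Rle_dec x s); unfold Rabs;
       repeat destruct Rcase_abs; lra.
   - apply Rmult_le_compat_l; [exact Hg0 | exact Hs]. }
 assert (Hphi : Rabs ((f (x + h) - (x + h) * f1 x) - (f x - x * f1 x))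
                <= (g * Rabs h) * Rabs (x + h - x)).
 { apply (Rabs_sub_le_of_derive (fun s => f s - s * f1 x) (fun s => f1 s - f1 x)).
   - intros s _. apply (is_derive_minus f (fun s => s * f1 x)); [apply Hd1|].
     auto_derive; auto; ring.
   - intros s Hs. apply Hf1.
     unfold Rmin, Rmax in Hs; destruct (Rle_dec x (x + h)); unfold Rabs;
       repeat destruct Rcase_abs; lra. }
 replace (x + h - x) with h in Hphi by ring.
 replace (h ^ 2 * g) with (g * Rabs h * Rabs h) by (rewrite <- pow2_abs; ring).
 replace (f (x + h) - f x - h * f1 x)
   with ((f (x + h) - (x + h) * f1 x) - (f x - x * f1 x)) by ring.
 exact Hphi.
Qed.

(** * Improper integrals of exponentially decaying functions *)

Definition exp_bounded (C : R) (h : R -> R) : Prop :=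
  forall t, Rabs (h t) <= C * exp (- Rabs t).

Lemma exp_bounded_nonneg C h : exp_bounded C h -> 0 <= C.
Proof.
 intros H. specialize (H 0). rewrite Rabs_R0, Ropp_0, exp_0, Rmult_1_r in H.
 generalize (Rabs_pos (h 0)); lra.
Qed.

Lemma exp_bounded_reflect C h : exp_bounded C h -> exp_bounded C (fun t => - h (- t)).
Proof. intros H t. rewrite Rabs_Ropp, <- (Rabs_Ropp t). apply H. Qed.

Lemma exp_bounded_scal_exp C : 0 <= C -> exp_bounded C (fun t => C * exp (- Rabs t)).
Proof.
 intros HC t. rewrite Rabs_right; [lra|].
 apply Rle_ge, Rmult_le_pos; [exact HC | left; apply exp_pos].
Qed.

Lemma continuous_scal_exp_opp_abs C t : continuous (fun t => C * exp (- Rabs t)) t.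
Proof.
 apply (continuous_scal_r C (fun t => exp (- Rabs t))).
 apply (continuous_comp (fun t => - Rabs t) exp).
 - apply (continuous_opp (fun t => Rabs t)), continuous_Rabs.
 - apply (ex_derive_continuous (K:=R_AbsRing) (V:=R_NormedModule)). auto_derive; auto.
Qed.

Lemma exp_opp_eventually_lt C eps : 0 < eps -> exists M, 0 <= M /\ C * exp (- M) < eps.
Proof.
 intros He. set (K := (Rabs C + 1) / eps).
 assert (HK : 0 < K) by (apply Rdiv_lt_0_compat; [generalize (Rabs_pos C) |]; lra).
 exists (Rmax 0 (ln K)). split; [apply Rmax_l|].
 assert (Hexp : exp (- Rmax 0 (ln K)) <= / K).
 { replace (/ K) with (exp (- ln K)) by (rewrite exp_Ropp, exp_ln; auto).
   apply exp_le_compat. generalize (Rmax_r 0 (ln K)); lra. }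
 apply Rle_lt_trans with (Rabs C * / K).
 - apply Rle_trans with (Rabs C * exp (- Rmax 0 (ln K))).
   + apply Rmult_le_compat_r; [left; apply exp_pos | apply Rle_abs].
   + apply Rmult_le_compat_l; [apply Rabs_pos | exact Hexp].
 - unfold K. rewrite Rinv_div.
   apply Rmult_lt_reg_r with (Rabs C + 1); [generalize (Rabs_pos C); lra|].
   field_simplify; [| generalize (Rabs_pos C); lra].
   generalize (Rabs_pos C); nra.
Qed.

Lemma exp_bounded_eventually_lt C h : exp_bounded C h ->
  forall eps, 0 < eps -> exists M, forall t, M < Rabs t -> Rabs (h t) < eps.
Proof.
 intros Hd eps He. destruct (exp_opp_eventually_lt C eps He) as [M [HM HMe]].
 exists M. intros t Ht. eapply Rle_lt_trans; [apply Hd|].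
 eapply Rle_lt_trans; [|exact HMe].
 apply Rmult_le_compat_l; [exact (exp_bounded_nonneg C h Hd)|].
 apply exp_le_compat. lra.
Qed.

Lemma filterlim_exp_bounded_infty C h : exp_bounded C h ->
  filterlim h Fm (locally 0) /\ filterlim h Fp (locally 0).
Proof.
 intros Hd. split; apply filterlim_locally; intros eps;
   destruct (exp_bounded_eventually_lt C h Hd eps (cond_pos eps)) as [M HM].
 - exists (- Rabs M). intros t Ht. change (Rabs (h t - 0) < eps).
   rewrite Rminus_0_r. apply HM. generalize (Rle_abs M). unfold Rabs at 2; destruct Rcase_abs; lra.
 - exists (Rabs M). intros t Ht. change (Rabs (h t - 0) < eps).
   rewrite Rminus_0_r. apply HM. generalize (Rle_abs M). unfold Rabs at 2; destruct Rcase_abs; lra.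
Qed.

Lemma RInt_scal_exp_opp C x y :
  RInt (fun t => C * exp (- t)) x y = C * exp (- x) - C * exp (- y).
Proof.
 apply is_RInt_unique.
 replace (C * exp (- x) - C * exp (- y))
   with (minus ((fun t => - C * exp (- t)) y) ((fun t => - C * exp (- t)) x))
   by (unfold minus, plus, opp; simpl; ring).
 apply (is_RInt_derive (fun t => - C * exp (- t))).
 - intros t _. auto_derive; auto; ring.
 - intros t _. apply (ex_derive_continuous (K:=R_AbsRing) (V:=R_NormedModule)).
   auto_derive; auto.
Qed.

Lemma abs_RInt_right_tail_le (h : R -> R) C M x y : (forall t, continuous h t) ->
  exp_bounded C h -> 0 <= M -> M <= x -> M <= y -> Rabs (RInt h x y) <= C * exp (- M).
Proof.
 intros Hc Hd HM Hx Hy. pose proof (exp_bounded_nonneg C h Hd) as HC.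
 assert (Hle : forall x y, M <= x -> x <= y -> Rabs (RInt h x y) <= C * exp (- M)).
 { clear x y Hx Hy. intros x y Hx Hxy.
   eapply Rle_trans; [apply abs_RInt_le; [exact Hxy | apply ex_RInt_continuous_R, Hc]|].
   eapply Rle_trans.
   { apply RInt_le with (g := fun t => C * exp (- t)); [exact Hxy | ..].
     - apply ex_RInt_continuous_R. intros t.
       apply (continuous_comp h Rabs); [apply Hc | apply continuous_Rabs].
     - apply ex_RInt_continuous_R. intros t.
       apply (ex_derive_continuous (K:=R_AbsRing) (V:=R_NormedModule)). auto_derive; auto.
     - intros t Ht. rewrite <- (Rabs_right t) at 2 by lra. apply Hd. }
   rewrite RInt_scal_exp_opp.
   assert (exp (- x) <= exp (- M)) by (apply exp_le_compat; lra).
   generalize (exp_pos (- y)); nra. }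
 destruct (Rle_dec x y); [apply Hle; auto|].
 rewrite <- (opp_RInt_swap h y x) by (apply ex_RInt_continuous_R, Hc).
 unfold opp; simpl. rewrite Rabs_Ropp. apply Hle; lra.
Qed.

Lemma abs_RInt_left_tail_le (h : R -> R) C M x y : (forall t, continuous h t) ->
  exp_bounded C h -> 0 <= M -> x <= - M -> y <= - M -> Rabs (RInt h x y) <= C * exp (- M).
Proof.
 intros Hc Hd HM Hx Hy.
 assert (Hr : is_RInt (fun t => opp (h (- t))) (- x) (- y) (RInt h x y)).
 { apply (is_RInt_comp_opp (V:=R_NormedModule)). rewrite !Ropp_involutive.
   apply (RInt_correct (V:=R_CompleteNormedModule)), ex_RInt_continuous_R, Hc. }
 rewrite <- (is_RInt_unique _ _ _ _ Hr).
 apply (abs_RInt_right_tail_le (fun t => - h (- t)) C M (- x) (- y)).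
 - intros t. apply (continuous_opp (fun t => h (- t))).
   apply (continuous_comp Ropp h); [| apply Hc].
   apply (ex_derive_continuous (K:=R_AbsRing) (V:=R_NormedModule)). auto_derive; auto.
 - apply exp_bounded_reflect, Hd.
 - exact HM.
 - lra.
 - lra.
Qed.

Lemma is_RInt_gen_of_filterlim (h : R -> R) (Fa Fb : (R -> Prop) -> Prop) l :
  Filter Fa -> Filter Fb ->
  filter_prod Fa Fb (fun ab => ex_RInt h (fst ab) (snd ab)) ->
  filterlim (fun ab => RInt h (fst ab) (snd ab)) (filter_prod Fa Fb) (locally l) ->
  is_RInt_gen h Fa Fb l.
Proof.
 intros FFa FFb Hex Hlim P HP. specialize (Hlim P HP).
 unfold filtermap in Hlim. unfold filtermapi.
 generalize (filter_and _ _ Hex Hlim). apply filter_imp.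
 intros [a b] [Hab HPab]. exists (RInt h a b).
 split; [apply (RInt_correct (V:=R_CompleteNormedModule)), Hab | exact HPab].
Qed.

(** The Cauchy criterion: both tails of the integral are at most [C e^{-M}]. *)
Lemma ex_RInt_gen_exp_bounded (h : R -> R) C : (forall t, continuous h t) ->
  exp_bounded C h -> ex_RInt_gen h Fm Fp.
Proof.
 intros Hc Hd.
 set (F := filtermap (fun ab : R * R => RInt h (fst ab) (snd ab)) (filter_prod Fm Fp)).
 assert (PF : ProperFilter F) by (apply filtermap_proper_filter; typeclasses eauto).
 assert (Hcau : cauchy F).
 { apply cauchy_distance; auto. intros eps.
   destruct (exp_opp_eventually_lt C (eps / 2)) as [M [HM HMe]];
     [generalize (cond_pos eps); lra|].
   exists (fun z => exists a b, a < - M /\ M < b /\ z = RInt h a b). split.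
   - apply Filter_prod with (fun a => a < - M) (fun b => M < b).
     + exists (- M). auto.
     + exists M. auto.
     + intros a b Ha Hb. exists a, b. auto.
   - intros u v [a [b [Ha [Hb ->]]]] [a' [b' [Ha' [Hb' ->]]]].
     change (Rabs (RInt h a' b' - RInt h a b) < eps).
     rewrite <- (RInt_Chasles h a' a b') by (apply ex_RInt_continuous_R, Hc).
     rewrite <- (RInt_Chasles h a b b') by (apply ex_RInt_continuous_R, Hc).
     unfold plus; simpl.
     replace (RInt h a' a + (RInt h a b + RInt h b b') - RInt h a b)
       with (RInt h a' a + RInt h b b') by ring.
     eapply Rle_lt_trans; [apply Rabs_triang|].
     pose proof (abs_RInt_left_tail_le h C M a' a Hc Hd HM ltac:(lra) ltac:(lra)).
     pose proof (abs_RInt_right_tail_le h C M b b' Hc Hd HM ltac:(lra) ltac:(lra)).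
     lra. }
 exists (lim F). apply is_RInt_gen_of_filterlim; try typeclasses eauto.
 - apply filter_forall. intros; apply ex_RInt_continuous_R, Hc.
 - intros P [eps HP]. generalize (complete_cauchy F PF Hcau eps). apply filter_imp. auto.
Qed.

Lemma is_lim_RInt_symmetric (h : R -> R) l : (forall t, continuous h t) ->
  is_RInt_gen h Fm Fp l -> is_lim (fun x => RInt h (- x) x) p_infty l.
Proof.
 intros Hc Hl P HP.
 assert (Hpair : filterlimi (fun x => is_RInt h (- x) x) Fp (locally l)).
 { apply (filterlimi_comp_2 (G:=Fm) (H:=Fp) (fun x => - x) (fun x => x)
            (fun a b => is_RInt h a b)); [| apply filterlim_id | exact Hl].
   apply (filterlim_Rbar_opp p_infty). }
 specialize (Hpair P HP). unfold filtermapi in Hpair.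
 change (Fp (fun x => P (RInt h (- x) x))). revert Hpair. apply filter_imp.
 intros x [v [Hv HPv]]. rewrite (is_RInt_unique _ _ _ _ Hv). exact HPv.
Qed.

Lemma RInt_gen_odd (h : R -> R) : (forall t, continuous h t) ->
  (forall t, h (- t) = - h t) -> ex_RInt_gen h Fm Fp -> RInt_gen h Fm Fp = 0.
Proof.
 intros Hc Ho Hex.
 assert (Hsym : forall x, RInt h (- x) x = 0).
 { intros x.
   assert (Hr : is_RInt (fun t => opp (h (- t))) x (- x) (RInt h (- x) x)).
   { apply (is_RInt_comp_opp (V:=R_NormedModule)). rewrite Ropp_involutive.
     apply (RInt_correct (V:=R_CompleteNormedModule)), ex_RInt_continuous_R, Hc. }
   apply (is_RInt_ext _ h) in Hr; [| intros t _; unfold opp; simpl; rewrite Ho; ring].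
   pose proof (is_RInt_unique _ _ _ _ Hr) as E1.
   pose proof (opp_RInt_swap h x (- x) (ex_RInt_continuous_R h _ _ Hc)) as E2.
   unfold opp in E2; simpl in E2. lra. }
 pose proof (is_lim_RInt_symmetric h _ Hc (RInt_gen_correct _ Hex)) as Hlim.
 apply (is_lim_ext _ (fun _ => 0)) in Hlim; [| exact Hsym].
 pose proof (is_lim_unique _ _ _ Hlim) as E. rewrite Lim_const in E.
 injection E. auto.
Qed.

Lemma RInt_gen_gt0 (h : R -> R) : (forall t, continuous h t) ->
  (forall t, 0 <= h t) -> 0 < h 0 -> ex_RInt_gen h Fm Fp -> 0 < RInt_gen h Fm Fp.
Proof.
 intros Hc Hp H0 Hex.
 destruct (proj1 (filterlim_locally h (h 0)) (Hc 0) (mkposreal (h 0 / 2) ltac:(lra)))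
   as [d Hd].
 set (e := d / 2).
 assert (He : 0 < e) by (unfold e; generalize (cond_pos d); lra).
 assert (Hcore : e * h 0 <= RInt h (- e) e).
 { replace (e * h 0) with (RInt (fun _ => h 0 / 2) (- e) e)
     by (rewrite RInt_const; unfold scal; simpl; unfold mult; simpl; field).
   apply RInt_le; [lra | apply ex_RInt_continuous_R; intros; apply continuous_const
                  | apply ex_RInt_continuous_R, Hc |].
   intros y Hy.
   assert (Hball : ball 0 d y).
   { change (Rabs (y - 0) < d). unfold e in Hy. unfold Rabs; destruct Rcase_abs; lra. }
   specialize (Hd y Hball). change (Rabs (h y - h 0) < h 0 / 2) in Hd.
   unfold Rabs in Hd; destruct Rcase_abs in Hd; lra. }
 assert (Hlow : Rbar_locally' p_infty (fun x => e * h 0 <= RInt h (- x) x)).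
 { exists e. intros x Hx.
   rewrite <- (RInt_Chasles h (- x) (- e) x) by (apply ex_RInt_continuous_R, Hc).
   rewrite <- (RInt_Chasles h (- e) e x) by (apply ex_RInt_continuous_R, Hc).
   unfold plus; simpl.
   assert (0 <= RInt h (- x) (- e))
     by (apply RInt_ge_0; [lra | apply ex_RInt_continuous_R, Hc | intros; apply Hp]).
   assert (0 <= RInt h e x)
     by (apply RInt_ge_0; [lra | apply ex_RInt_continuous_R, Hc | intros; apply Hp]).
   lra. }
 pose proof (is_lim_le_loc _ _ p_infty _ _ Hlow (is_lim_const (e * h 0) p_infty)
   (is_lim_RInt_symmetric h _ Hc (RInt_gen_correct _ Hex))) as Hle.
 simpl in Hle. assert (0 < e * h 0) by (apply Rmult_lt_0_compat; lra). lra.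
Qed.

Lemma is_derive_of_quadratic_remainder (F : R -> R) x L c r : 0 < r ->
  (forall h, Rabs h < r -> Rabs (F (x + h) - F x - h * L) <= c * h ^ 2) ->
  is_derive F x L.
Proof.
 intros Hr Hq. apply is_derive_Reals. intros eps Heps.
 set (c' := Rabs c + 1).
 assert (Hc' : 0 < c') by (unfold c'; generalize (Rabs_pos c); lra).
 assert (Hd : 0 < Rmin r (eps / c')) by (apply Rmin_pos; [| apply Rdiv_lt_0_compat]; auto).
 exists (mkposreal _ Hd). intros h Hh0 Hh. simpl in Hh.
 assert (Hhr : Rabs h < r) by (generalize (Rmin_l r (eps / c')); lra).
 assert (Hhe : Rabs h * c' < eps).
 { apply Rmult_lt_reg_r with (/ c'); [apply Rinv_0_lt_compat, Hc'|].
   rewrite Rmult_assoc, Rinv_r by lra. generalize (Rmin_r r (eps / c')); unfold Rdiv; lra. }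
 assert (Hah : 0 < Rabs h) by (apply Rabs_pos_lt, Hh0).
 replace ((F (x + h) - F x) / h - L) with ((F (x + h) - F x - h * L) / h) by (field; auto).
 unfold Rdiv. rewrite Rabs_mult, Rabs_inv.
 apply Rmult_lt_reg_r with (Rabs h); [exact Hah|].
 rewrite Rmult_assoc, Rinv_l, Rmult_1_r by lra.
 eapply Rle_lt_trans; [apply Hq, Hhr|].
 rewrite <- pow2_abs.
 assert (c * Rabs h ^ 2 <= c' * Rabs h ^ 2)
   by (apply Rmult_le_compat_r; [apply pow2_ge_0 | unfold c'; generalize (Rle_abs c); lra]).
 nra.
Qed.

Lemma filter_prod_le : filter_prod Fm Fp (fun ab : R * R => fst ab <= snd ab).
Proof.
 apply Filter_prod with (fun a => a < 0) (fun b => 0 < b).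
 - exists 0; auto.
 - exists 0; auto.
 - intros; simpl; lra.
Qed.

Lemma RInt_gen_param_remainder_le (f f1 f2 : R -> R -> R) (g : R -> R) x r h :
  (forall s t, is_derive (fun s => f s t) s (f1 s t)) ->
  (forall s t, is_derive (fun s => f1 s t) s (f2 s t)) ->
  (forall s t, Rabs (s - x) < r -> Rabs (f2 s t) <= g t) ->
  ex_RInt_gen (f x) Fm Fp -> ex_RInt_gen (f (x + h)) Fm Fp ->
  ex_RInt_gen (f1 x) Fm Fp -> ex_RInt_gen g Fm Fp -> Rabs h < r ->
  Rabs (RInt_gen (f (x + h)) Fm Fp - RInt_gen (f x) Fm Fp - h * RInt_gen (f1 x) Fm Fp)
    <= RInt_gen g Fm Fp * h ^ 2.
Proof.
 intros Hd1 Hd2 Hg Hf Hfh Hf1 Hgi Hh.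
 pose proof (is_RInt_gen_minus _ _ _ _ (RInt_gen_correct _ Hfh) (RInt_gen_correct _ Hf))
   as Hdiff.
 pose proof (is_RInt_gen_minus _ _ _ _ Hdiff
   (is_RInt_gen_scal _ h _ (RInt_gen_correct _ Hf1))) as Hrem.
 pose proof (is_RInt_gen_scal _ (h ^ 2) _ (RInt_gen_correct _ Hgi)) as Hbound.
 replace (RInt_gen g Fm Fp * h ^ 2) with (h ^ 2 * RInt_gen g Fm Fp) by ring.
 change (norm (minus (minus (RInt_gen (f (x + h)) Fm Fp) (RInt_gen (f x) Fm Fp))
                     (scal h (RInt_gen (f1 x) Fm Fp)))
         <= scal (h ^ 2) (RInt_gen g Fm Fp)).
 refine (RInt_gen_norm _ _ _ _ filter_prod_le _ Hrem Hbound).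
 apply filter_forall. intros ab y _.
 change (Rabs (f (x + h) y - f x y - h * f1 x y) <= h ^ 2 * g y).
 apply (taylor2_remainder_le (fun s => f s y) (fun s => f1 s y) (fun s => f2 s y) (g y) x h r);
   auto.
Qed.

(** For [|s - x| < 1] the second derivative is dominated by the integrable
    [K e^{|x|+1} e^{-|t|}], so the Taylor remainders integrate to [O(h^2)]. *)
Lemma is_derive_RInt_gen_param (f f1 f2 : R -> R -> R) K x :
  (forall s t, is_derive (fun s => f s t) s (f1 s t)) ->
  (forall s t, is_derive (fun s => f1 s t) s (f2 s t)) ->
  (forall s, exp_bounded (K * exp (Rabs s)) (f2 s)) ->
  (forall s, ex_RInt_gen (f s) Fm Fp) -> ex_RInt_gen (f1 x) Fm Fp ->
  is_derive (fun s => RInt_gen (f s) Fm Fp) x (RInt_gen (f1 x) Fm Fp).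
Proof.
 intros Hd1 Hd2 Hb Hf Hf1.
 set (G := K * exp (Rabs x + 1)).
 assert (HK : 0 <= K).
 { pose proof (exp_bounded_nonneg _ _ (Hb 0)) as H. rewrite Rabs_R0, exp_0 in H. lra. }
 assert (HG : 0 <= G) by (apply Rmult_le_pos; [exact HK | left; apply exp_pos]).
 apply (is_derive_of_quadratic_remainder _ x _ (RInt_gen (fun t => G * exp (- Rabs t)) Fm Fp) 1);
   [lra|].
 intros h Hh. apply (RInt_gen_param_remainder_le f f1 f2 _ x 1 h); auto.
 - intros s t Hs. eapply Rle_trans; [apply Hb|].
   apply Rmult_le_compat_r; [left; apply exp_pos|].
   apply Rmult_le_compat_l; [exact HK|]. apply exp_le_compat.
   generalize (Rabs_triang (s - x) x). replace (s - x + x) with s by ring. lra.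
 - apply (ex_RInt_gen_exp_bounded _ G); [apply continuous_scal_exp_opp_abs |].
   apply exp_bounded_scal_exp, HG.
Qed.

(** * The Melnikov integrands *)

(** [kink y = 4 atan e^y] is the pendulum separatrix, [kink_slope = kink' = 2 sech] and
    [kink_tanh = - tanh], so that [kink_slope' = kink_slope * kink_tanh].  [angle] is the
    argument of the cosine in [melnikov_integrand], and [melnikov_dk] is the [k]-th
    derivative of [melnikov_integrand] in [s]. *)
Definition kink (y : R) : R := 4 * atan (exp y).
Definition kink_slope (y : R) : R := 4 * exp y / (1 + exp y ^ 2).
Definition kink_tanh (y : R) : R := (1 - exp y ^ 2) / (1 + exp y ^ 2).
Definition angle (lam s t : R) : R := kink (lam * t) - kink (t - s).

Definition melnikov_d1 (lam s t : R) : R := sin (angle lam s t) * kink_slope (t - s).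
Definition melnikov_d2 (lam s t : R) : R :=
  cos (angle lam s t) * kink_slope (t - s) ^ 2
  - sin (angle lam s t) * kink_slope (t - s) * kink_tanh (t - s).
Definition melnikov_d3 (lam s t : R) : R :=
  - sin (angle lam s t) * kink_slope (t - s) ^ 3
  - 3 * cos (angle lam s t) * kink_slope (t - s) ^ 2 * kink_tanh (t - s)
  + sin (angle lam s t) * kink_slope (t - s) * (2 * kink_tanh (t - s) ^ 2 - 1).

Definition melnikov_d2_density (lam t : R) : R :=
  lam * cos (phi lam t) * kink_slope (lam * t) * kink_slope t.

(** The form in which [auto_derive] states its side conditions. *)
Lemma one_plus_exp_mul_exp_neq0 y : 1 + exp y * (exp y * 1) <> 0.
Proof. generalize (exp_pos y); intros; nra. Qed.
Lemma one_plus_exp_pow2_neq0 y : 1 + exp y ^ 2 <> 0.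
Proof. generalize (exp_pos y); intros; nra. Qed.

Ltac melnikov_derive :=
  unfold melnikov_integrand, melnikov_d1, melnikov_d2, melnikov_d3, melnikov_d2_density,
    phi, angle, kink, kink_slope, kink_tanh, Rminus;
  auto_derive;
  [ repeat split; auto; apply one_plus_exp_mul_exp_neq0
  | field; repeat split; apply one_plus_exp_pow2_neq0 || apply one_plus_exp_mul_exp_neq0 ].

Lemma is_derive_melnikov_integrand lam s t :
  is_derive (fun s => melnikov_integrand lam s t) s (melnikov_d1 lam s t).
Proof. melnikov_derive. Qed.
Lemma is_derive_melnikov_d1 lam s t :
  is_derive (fun s => melnikov_d1 lam s t) s (melnikov_d2 lam s t).
Proof. melnikov_derive. Qed.
Lemma is_derive_melnikov_d2 lam s t :
  is_derive (fun s => melnikov_d2 lam s t) s (melnikov_d3 lam s t).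
Proof. melnikov_derive. Qed.

Lemma is_derive_melnikov_d1_0_t lam t :
  is_derive (melnikov_d1 lam 0) t (melnikov_d2_density lam t - melnikov_d2 lam 0 t).
Proof.
 apply (is_derive_ext (fun t => sin (phi lam t) * kink_slope t)).
 { intros u. unfold melnikov_d1, angle. rewrite Rminus_0_r. reflexivity. }
 unfold melnikov_d2, angle. rewrite !Rminus_0_r. melnikov_derive.
Qed.

Ltac melnikov_continuous :=
  apply (ex_derive_continuous (K:=R_AbsRing) (V:=R_NormedModule));
  unfold melnikov_integrand, melnikov_d1, melnikov_d2, melnikov_d2_density,
    phi, angle, kink, kink_slope, kink_tanh, Rminus;
  auto_derive; repeat split; auto; apply one_plus_exp_mul_exp_neq0.

Lemma continuous_melnikov_integrand lam s t : continuous (melnikov_integrand lam s) t.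
Proof. melnikov_continuous. Qed.
Lemma continuous_melnikov_d1 lam s t : continuous (melnikov_d1 lam s) t.
Proof. melnikov_continuous. Qed.
Lemma continuous_melnikov_d2 lam s t : continuous (melnikov_d2 lam s) t.
Proof. melnikov_continuous. Qed.
Lemma continuous_melnikov_d2_density lam t : continuous (melnikov_d2_density lam) t.
Proof. melnikov_continuous. Qed.

Lemma kink_slope_pos y : 0 < kink_slope y.
Proof. unfold kink_slope. generalize (exp_pos y); intros. apply Rdiv_lt_0_compat; nra. Qed.

Lemma kink_slope_le_2 y : kink_slope y <= 2.
Proof.
 unfold kink_slope. generalize (exp_pos y); intros.
 apply Rmult_le_reg_r with (1 + exp y ^ 2); [nra|].
 unfold Rdiv; rewrite Rmult_assoc, Rinv_l by apply one_plus_exp_pow2_neq0.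
 generalize (pow2_ge_0 (exp y - 1)); nra.
Qed.

Lemma kink_slope_le_exp y : kink_slope y <= 4 * exp (- Rabs y).
Proof.
 unfold kink_slope. generalize (exp_pos y); intros.
 apply Rmult_le_reg_r with (1 + exp y ^ 2); [nra|].
 unfold Rdiv; rewrite Rmult_assoc, Rinv_l, Rmult_1_r by apply one_plus_exp_pow2_neq0.
 destruct (Rle_dec 0 y).
 - rewrite Rabs_right, exp_Ropp by lra.
   assert (/ exp y * exp y = 1) by (apply Rinv_l; lra).
   assert (/ exp y > 0) by (apply Rinv_0_lt_compat; lra). nra.
 - rewrite Rabs_left, Ropp_involutive by lra. nra.
Qed.

Lemma kink_slope_shift_le t s : kink_slope (t - s) <= 4 * exp (Rabs s) * exp (- Rabs t).
Proof.
 eapply Rle_trans; [apply kink_slope_le_exp|].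
 rewrite Rmult_assoc, <- exp_plus. apply Rmult_le_compat_l; [lra|].
 apply exp_le_compat.
 generalize (Rabs_triang (t - s) s). replace (t - s + s) with t by ring. lra.
Qed.

Lemma kink_slope_opp y : kink_slope (- y) = kink_slope y.
Proof.
 unfold kink_slope. rewrite exp_Ropp. generalize (exp_pos y); intros.
 field; split; [apply one_plus_exp_pow2_neq0 | lra].
Qed.

Lemma kink_opp y : kink (- y) = 2 * PI - kink y.
Proof.
 unfold kink. rewrite exp_Ropp, atan_inv by apply exp_pos. field.
Qed.

Lemma kink_le_exp y : 0 <= kink y <= 4 * exp y.
Proof.
 unfold kink. assert (Hpos : 0 < exp y) by apply exp_pos.
 assert (Hat : Rabs (atan (exp y) - atan 0) <= 1 * Rabs (exp y - 0)).
 { apply (Rabs_sub_le_of_derive atan (fun x => / (1 + x²))).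
   - intros; apply is_derive_atan.
   - intros x _. assert (0 <= x²) by apply Rle_0_sqr.
     rewrite Rabs_right by (left; apply Rinv_0_lt_compat; lra).
     rewrite <- Rinv_1. apply Rinv_le_contravar; lra. }
 rewrite atan_0, !Rminus_0_r, Rmult_1_l, (Rabs_right (exp y)) in Hat by lra.
 assert (0 < atan (exp y)) by (rewrite <- atan_0; apply atan_increasing, Hpos).
 rewrite Rabs_right in Hat by lra. lra.
Qed.

Lemma kink_le x y : x <= y -> kink x <= kink y.
Proof.
 intros [Hlt| ->]; [| right; reflexivity].
 unfold kink. left. apply Rmult_lt_compat_l; [lra|].
 apply atan_increasing, exp_increasing, Hlt.
Qed.

Lemma phi_opp lam t : phi lam (- t) = - phi lam t.
Proof.
 change (kink (lam * - t) - kink (- t) = - (kink (lam * t) - kink t)).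
 rewrite <- Ropp_mult_distr_r, !kink_opp. ring.
Qed.

Lemma angle_0 lam t : angle lam 0 t = phi lam t.
Proof. unfold angle. rewrite Rminus_0_r. reflexivity. Qed.

(** For [t >= 0] we compare both kinks with their limit [2 PI] instead of [0],
    using [kink_opp]. *)
Lemma Rabs_angle_le lam s t : 1 <= lam ->
  Rabs (angle lam s t) <= (4 * exp (Rabs s) + 4) * exp (- Rabs t).
Proof.
 intros Hl.
 assert (Hkink : forall u v, u <= v -> kink u <= 4 * exp v).
 { intros u v Huv. apply Rle_trans with (4 * exp u); [apply kink_le_exp|].
   apply Rmult_le_compat_l; [lra | apply exp_le_compat, Huv]. }
 assert (Hshift : exp (Rabs s - Rabs t) = exp (Rabs s) * exp (- Rabs t))
   by (rewrite <- exp_plus; reflexivity).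
 assert (Hsum : forall a b, 0 <= a <= 4 * exp (Rabs s - Rabs t) ->
                 0 <= b <= 4 * exp (- Rabs t) ->
                 Rabs (a - b) <= (4 * exp (Rabs s) + 4) * exp (- Rabs t)).
 { intros a b Ha Hb. rewrite Hshift in Ha. apply Rabs_le. split; lra. }
 generalize (Rle_abs s) (Rle_abs (- s)); rewrite Rabs_Ropp; intros Hs1 Hs2.
 destruct (Rle_dec t 0) as [Ht|Ht].
 - unfold angle. rewrite Rabs_minus_sym.
   apply Hsum; (split; [apply kink_le_exp | apply Hkink]);
     rewrite (Rabs_left1 t) by exact Ht; nra.
 - replace (angle lam s t) with (kink (- (t - s)) - kink (- (lam * t)))
     by (unfold angle; rewrite !kink_opp; ring).
   apply Hsum; (split; [apply kink_le_exp | apply Hkink]);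
     rewrite (Rabs_right t) by lra; nra.
Qed.

Lemma Rabs_one_minus_cos_le x : Rabs (1 - cos x) <= Rabs x.
Proof.
 replace (1 - cos x) with (- cos x - - cos 0) by (rewrite cos_0; ring).
 replace (Rabs x) with (1 * Rabs (x - 0)) by (rewrite Rminus_0_r; ring).
 apply (Rabs_sub_le_of_derive (fun x => - cos x) sin).
 - intros; auto_derive; auto; ring.
 - intros; apply Rabs_le, SIN_bound.
Qed.

Lemma Rabs_mult_le_1 a d : Rabs a <= 1 -> 0 <= d -> Rabs (a * d) <= d.
Proof. intros. rewrite Rabs_mult, (Rabs_right d) by lra. generalize (Rabs_pos a); nra. Qed.

Lemma exp_bounded_melnikov_integrand lam s : 1 <= lam ->
  exp_bounded (4 * exp (Rabs s) + 4) (melnikov_integrand lam s).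
Proof.
 intros Hl t. eapply Rle_trans; [apply Rabs_one_minus_cos_le | apply Rabs_angle_le, Hl].
Qed.

Lemma exp_bounded_melnikov_d1 lam s : exp_bounded (4 * exp (Rabs s)) (melnikov_d1 lam s).
Proof.
 intros t. eapply Rle_trans; [| apply kink_slope_shift_le].
 apply Rabs_mult_le_1; [apply Rabs_le, SIN_bound | left; apply kink_slope_pos].
Qed.

Lemma Rabs_quadratic_shape_le a b d u : -1 <= a <= 1 -> -1 <= b <= 1 -> 0 <= d <= 2 ->
  -1 <= u <= 1 -> Rabs (b * d ^ 2 - a * d * u) <= 3 * d.
Proof.
 intros Ha Hb Hd Hu.
 assert (Hau : -1 <= a * u <= 1) by (split; nra).
 apply Rabs_le; split; nra.
Qed.

Lemma Rabs_cubic_shape_le a b d u : -1 <= a <= 1 -> -1 <= b <= 1 -> 0 <= d <= 2 ->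
  -1 <= u <= 1 ->
  Rabs (- a * d ^ 3 - 3 * b * d ^ 2 * u + a * d * (2 * u ^ 2 - 1)) <= 11 * d.
Proof.
 intros Ha Hb Hd Hu.
 assert (Hbu : -1 <= b * u <= 1) by (split; nra).
 assert (Hw : -1 <= 2 * u ^ 2 - 1 <= 1) by (split; nra).
 assert (Haw : -1 <= a * (2 * u ^ 2 - 1) <= 1) by (split; nra).
 assert (Hd2 : d ^ 2 <= 2 * d) by nra.
 assert (Hd3 : d ^ 3 <= 4 * d).
 { assert (0 <= d * ((2 - d) * (2 + d))) by (apply Rmult_le_pos; [| apply Rmult_le_pos]; lra).
   replace (d ^ 3) with (4 * d - d * ((2 - d) * (2 + d))) by ring. lra. }
 assert (0 <= d ^ 2) by (apply pow_le; lra).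
 assert (0 <= d ^ 3) by (apply pow_le; lra).
 assert (- (4 * d) <= a * d ^ 3 <= 4 * d) by (split; nra).
 assert (- (6 * d) <= 3 * (b * u) * d ^ 2 <= 6 * d) by (split; nra).
 assert (- d <= a * (2 * u ^ 2 - 1) * d <= d) by (split; nra).
 apply Rabs_le; split; nra.
Qed.

Lemma kink_slope_range y : 0 <= kink_slope y <= 2.
Proof. split; [left; apply kink_slope_pos | apply kink_slope_le_2]. Qed.

Lemma kink_tanh_range y : -1 <= kink_tanh y <= 1.
Proof.
 unfold kink_tanh. assert (Hd : 0 < 1 + exp y ^ 2) by (generalize (exp_pos y); nra).
 split; [apply Rmult_le_reg_r with (1 + exp y ^ 2) | apply Rmult_le_reg_r with (1 + exp y ^ 2)];
   try exact Hd; unfold Rdiv; rewrite Rmult_assoc, Rinv_l by lra;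
   generalize (exp_pos y); nra.
Qed.

Lemma exp_bounded_melnikov_d2 lam s : exp_bounded (12 * exp (Rabs s)) (melnikov_d2 lam s).
Proof.
 intros t. eapply Rle_trans.
 - apply Rabs_quadratic_shape_le;
     [apply SIN_bound | apply COS_bound | apply kink_slope_range | apply kink_tanh_range].
 - generalize (kink_slope_shift_le t s); lra.
Qed.

Lemma exp_bounded_melnikov_d3 lam s : exp_bounded (44 * exp (Rabs s)) (melnikov_d3 lam s).
Proof.
 intros t. eapply Rle_trans.
 - apply Rabs_cubic_shape_le;
     [apply SIN_bound | apply COS_bound | apply kink_slope_range | apply kink_tanh_range].
 - generalize (kink_slope_shift_le t s); lra.
Qed.

Lemma exp_bounded_melnikov_d2_density lam : 0 <= lam ->
  exp_bounded (8 * lam) (melnikov_d2_density lam).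
Proof.
 intros Hl t. unfold melnikov_d2_density.
 replace (lam * cos (phi lam t) * kink_slope (lam * t) * kink_slope t)
   with (cos (phi lam t) * (lam * kink_slope (lam * t) * kink_slope t)) by ring.
 eapply Rle_trans.
 - apply Rabs_mult_le_1; [apply Rabs_le, COS_bound|].
   apply Rmult_le_pos; [apply Rmult_le_pos; [exact Hl|] |]; apply kink_slope_range.
 - generalize (kink_slope_range (lam * t)) (kink_slope_le_exp t) (kink_slope_pos t).
   intros. replace (8 * lam * exp (- Rabs t)) with (lam * 2 * (4 * exp (- Rabs t))) by ring.
   apply Rmult_le_compat; try nra.
Qed.

Lemma ex_RInt_gen_melnikov_integrand lam s : 1 <= lam ->
  ex_RInt_gen (melnikov_integrand lam s) Fm Fp.
Proof.
 intros Hl. eapply (ex_RInt_gen_exp_bounded _ _ (continuous_melnikov_integrand lam s)).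
 apply exp_bounded_melnikov_integrand, Hl.
Qed.

Lemma ex_RInt_gen_melnikov_d1 lam s : ex_RInt_gen (melnikov_d1 lam s) Fm Fp.
Proof.
 exact (ex_RInt_gen_exp_bounded _ _ (continuous_melnikov_d1 lam s) (exp_bounded_melnikov_d1 lam s)).
Qed.

Lemma ex_RInt_gen_melnikov_d2 lam s : ex_RInt_gen (melnikov_d2 lam s) Fm Fp.
Proof.
 exact (ex_RInt_gen_exp_bounded _ _ (continuous_melnikov_d2 lam s) (exp_bounded_melnikov_d2 lam s)).
Qed.

Lemma ex_RInt_gen_melnikov_d2_density lam : 0 <= lam ->
  ex_RInt_gen (melnikov_d2_density lam) Fm Fp.
Proof.
 intros Hl. eapply (ex_RInt_gen_exp_bounded _ _ (continuous_melnikov_d2_density lam)).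
 apply exp_bounded_melnikov_d2_density, Hl.
Qed.

Lemma is_derive_RInt_gen_melnikov_integrand lam x : 1 <= lam ->
  is_derive (fun s => RInt_gen (melnikov_integrand lam s) Fm Fp) x
    (RInt_gen (melnikov_d1 lam x) Fm Fp).
Proof.
 intros Hl. apply (is_derive_RInt_gen_param _ _ (melnikov_d2 lam) 12).
 - apply is_derive_melnikov_integrand.
 - apply is_derive_melnikov_d1.
 - apply exp_bounded_melnikov_d2.
 - intros s. apply ex_RInt_gen_melnikov_integrand, Hl.
 - apply ex_RInt_gen_melnikov_d1.
Qed.

Lemma is_derive_RInt_gen_melnikov_d1 lam x :
  is_derive (fun s => RInt_gen (melnikov_d1 lam s) Fm Fp) x
    (RInt_gen (melnikov_d2 lam x) Fm Fp).
Proof.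
 apply (is_derive_RInt_gen_param _ _ (melnikov_d3 lam) 44).
 - apply is_derive_melnikov_d1.
 - apply is_derive_melnikov_d2.
 - apply exp_bounded_melnikov_d3.
 - apply ex_RInt_gen_melnikov_d1.
 - apply ex_RInt_gen_melnikov_d2.
Qed.

Lemma RInt_gen_melnikov_d1_0 lam : RInt_gen (melnikov_d1 lam 0) Fm Fp = 0.
Proof.
 apply RInt_gen_odd; [apply continuous_melnikov_d1 | | apply ex_RInt_gen_melnikov_d1].
 intros t. unfold melnikov_d1. rewrite !angle_0, phi_opp, sin_neg, !Rminus_0_r, kink_slope_opp.
 ring.
Qed.

(** Integration by parts in [t]: [melnikov_d2 lam 0] differs from the nonnegative
    density by the [t]-derivative of [melnikov_d1 lam 0], which vanishes at both ends. *)
Lemma RInt_gen_melnikov_d2_0 lam : 1 <= lam ->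
  RInt_gen (melnikov_d2 lam 0) Fm Fp = RInt_gen (melnikov_d2_density lam) Fm Fp.
Proof.
 intros Hl.
 assert (Hdens := ex_RInt_gen_melnikov_d2_density lam ltac:(lra)).
 destruct (filterlim_exp_bounded_infty _ _ (exp_bounded_melnikov_d1 lam 0)) as [Hm Hp].
 assert (Hbd : is_RInt_gen (Derive (melnikov_d1 lam 0)) Fm Fp (0 - 0)).
 { apply is_RInt_gen_Derive; [| | exact Hm | exact Hp]; apply filter_forall; intros ab y _.
   - exists (melnikov_d2_density lam y - melnikov_d2 lam 0 y).
     apply is_derive_melnikov_d1_0_t.
   - apply (continuous_ext (fun t => melnikov_d2_density lam t - melnikov_d2 lam 0 t)).
     + intros z. symmetry. apply is_derive_unique, is_derive_melnikov_d1_0_t.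
     + apply (continuous_minus (melnikov_d2_density lam) (melnikov_d2 lam 0));
         [apply continuous_melnikov_d2_density | apply continuous_melnikov_d2]. }
 assert (Hall : is_RInt_gen (melnikov_d2 lam 0) Fm Fp
                 (minus (RInt_gen (melnikov_d2_density lam) Fm Fp) (0 - 0))).
 { apply (is_RInt_gen_ext (V:=R_NormedModule)
            (fun t => minus (melnikov_d2_density lam t) (Derive (melnikov_d1 lam 0) t))).
   - apply filter_forall. intros ab y _.
     rewrite (is_derive_unique _ _ _ (is_derive_melnikov_d1_0_t lam y)).
     unfold minus, plus, opp; simpl. ring.
   - apply (is_RInt_gen_minus (V:=R_NormedModule)); [exact (RInt_gen_correct _ Hdens) | exact Hbd]. }
 rewrite (is_RInt_gen_unique _ _ Hall). unfold minus, plus, opp; simpl. ring.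
Qed.

Lemma phi_range l0 lam : is_lambda0 l0 -> 1 <= lam <= l0 ->
  forall t, - (PI / 2) <= phi lam t <= PI / 2.
Proof.
 intros [_ [_ Hmax]] Hl.
 assert (Hpos : forall t, 0 < t -> 0 <= phi lam t <= PI / 2).
 { intros t Ht. specialize (Hmax t Ht).
   change (0 <= kink (lam * t) - kink t <= PI / 2).
   change (kink (l0 * t) - kink t <= PI / 2) in Hmax.
   assert (kink t <= kink (lam * t)) by (apply kink_le; nra).
   assert (kink (lam * t) <= kink (l0 * t)) by (apply kink_le; nra).
   lra. }
 intros t. generalize PI_RGT_0; intros.
 destruct (Rtotal_order t 0) as [Hneg|[->|Hgt]].
 - specialize (Hpos (- t) ltac:(lra)). rewrite phi_opp in Hpos. lra.
 - unfold phi. rewrite Rmult_0_r, exp_0. lra.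
 - specialize (Hpos t Hgt). lra.
Qed.

Lemma RInt_gen_melnikov_d2_density_pos l0 lam : is_lambda0 l0 -> 1 <= lam <= l0 ->
  0 < RInt_gen (melnikov_d2_density lam) Fm Fp.
Proof.
 intros Hl0 Hl.
 apply RInt_gen_gt0; [apply continuous_melnikov_d2_density | | |].
 - intros t. unfold melnikov_d2_density.
   destruct (phi_range l0 lam Hl0 Hl t) as [Hlo Hhi].
   generalize (cos_ge_0 _ Hlo Hhi) (kink_slope_pos (lam * t)) (kink_slope_pos t). intros.
   apply Rmult_le_pos; [apply Rmult_le_pos; [apply Rmult_le_pos|] |]; lra.
 - unfold melnikov_d2_density.
   replace (phi lam 0) with 0 by (unfold phi; rewrite Rmult_0_r, exp_0; ring).
   rewrite cos_0. generalize (kink_slope_pos (lam * 0)) (kink_slope_pos 0). intros.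
   apply Rmult_lt_0_compat; [apply Rmult_lt_0_compat; [apply Rmult_lt_0_compat|] |]; lra.
 - apply ex_RInt_gen_melnikov_d2_density. lra.
Qed.

Theorem proposition10 (l0 : R) (Hl0 : is_lambda0 l0) (lam : R) :
  1 <= lam <= l0 -> nondegenerate_critical_point (Ltilde lam) 0.
Proof.
 intros Hl.
 exists (fun s => - RInt_gen (melnikov_d1 lam s) Fm Fp), 1.
 split; [lra|]. split; [| split].
 - intros x _. apply (is_derive_opp (fun s => RInt_gen (melnikov_integrand lam s) Fm Fp)).
   apply is_derive_RInt_gen_melnikov_integrand. lra.
 - rewrite RInt_gen_melnikov_d1_0. ring.
 - exists (- RInt_gen (melnikov_d2 lam 0) Fm Fp). split.
   + apply (is_derive_opp (fun s => RInt_gen (melnikov_d1 lam s) Fm Fp)).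
     apply is_derive_RInt_gen_melnikov_d1.
   + rewrite RInt_gen_melnikov_d2_0 by lra.
     generalize (RInt_gen_melnikov_d2_density_pos l0 lam Hl0 Hl). lra.
Qed.
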